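(* Let $d\ge1$ and let $f:\{0,1\}^n\to\{0,1\}$ be a depth-$d$ decision tree with polynomial representation $f=M_1+M_2+\cdots+M_t$ over $\mathbb{F}_2$. Let $M_i=x_{i_1}\cdots x_{i_{d'}}$ (with $d'\le d$) be a maximal monomial of $f$. Then for all $\xi_1,\dots,\xi_{d'}\in\{0,1\}$, the function $f_{|x_{i_1}\gets\xi_1,\dots,x_{i_{d'}}\gets\xi_{d'}}$ is a depth-$(d-1)$ decision tree.
   Context: A decision tree over $x_1,\dots,x_n$ is a rooted binary tree whose internal nodes are labeled by variables, each having a 0-child and a 1-child, leaves labeled $0$ or $1$; it computes a Boolean function by following from the root the $x_i$-child at a node labeled $x_i$; a depth-$d$ decision tree is a function computed by such a tree with every root-to-leaf path having at most $d$ edges. Every Boolean function has a unique representation as a sum over $\mathbb{F}_2$ of distinct monomials (products of distinct variables; the empty product is the constant $1$). A monomial $M_i$ of $f$ is maximal if no other monomial $M_j$ of $f$ contains all variables of $M_i$. $f_{|x_{i_1}\gets\xi_1,\dots}$ denotes the function obtained by substituting $x_{i_r}=\xi_r$. *)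

From mathcomp Require Import all_boot.
Set Implicit Arguments. Unset Strict Implicit. Unset Printing Implicit Defensive.

Definition boolfun (n : nat) := ('I_n -> bool) -> bool.

Inductive dtree (n : nat) : Type :=
| DLeaf of bool
| DNode of 'I_n & dtree n & dtree n.

Fixpoint dt_eval n (T : dtree n) (x : 'I_n -> bool) : bool :=
  match T with
  | DLeaf b => b
  | DNode i T0 T1 => if x i then dt_eval T1 x else dt_eval T0 x
  end.

Fixpoint dt_depth n (T : dtree n) : nat :=
  match T with
  | DLeaf _ => 0
  | DNode _ T0 T1 => (maxn (dt_depth T0) (dt_depth T1)).+1
  end.

Definition is_depth_dt n (d : nat) (f : boolfun n) : Prop :=
  exists T : dtree n, dt_depth T <= d /\ forall x, dt_eval T x = f x.

Definition monomial n (S : {set 'I_n}) (x : 'I_n -> bool) : bool :=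
  [forall i in S, x i].

(* F (a set of distinct monomials) is the F_2 polynomial representation
   of f: f = sum over F of the monomials, sum taken in F_2 (xor). *)
Definition anf_rep n (F : {set {set 'I_n}}) (f : boolfun n) : Prop :=
  forall x, f x = \big[addb/false]_(S in F) monomial S x.

Definition maximal_monomial n (F : {set {set 'I_n}}) (M : {set 'I_n}) : Prop :=
  M \in F /\ forall S, S \in F -> M \subset S -> S = M.

Definition restrict n (f : boolfun n) (M : {set 'I_n}) (xi : 'I_n -> bool)
  : boolfun n :=
  fun x => f (fun i => if i \in M then xi i else x i).

From mathcomp Require Import all_boot.
Set Implicit Arguments. Unset Strict Implicit. Unset Printing Implicit Defensive.

(* Let T be a tree of depth <= d computing f, F the F_2
   representation of f and M a maximal monomial of F.
   If the root of T queries a variable of M, fixing M removes the root.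
   Otherwise the root queries some x_j with j \notin M, and
   f = if x_j then f1 else f0 for the cofactors f_b = f_{|x_j <- b}, which
   are computed by trees of depth <= d - 1.  Their representations are
   explicit (cofactor0 / cofactor1 below) and M remains maximal in both, so
   by induction their restrictions have depth <= d - 2 and f's restriction
   has depth <= d - 1.  When d = 1 the cofactors are constant, and a
   constant having a monomial is 1 (uniqueness of the representation, via
   Moebius inversion), so the restriction is the constant 1. *)

Lemma big_addb_odd (I : finType) (P : pred I) (b : I -> bool) :
  \big[addb/false]_(i in P) b i = odd #|[set i | P i && b i]|.
Proof.
rewrite -sum1dep_card big_mkcondr /=.
rewrite (big_morph odd (id1:=false) (id2:=0) oddD erefl).
by apply: eq_bigr => i _; case: (b i).
Qed.

Section AlgebraicNormalForm.
Variable n : nat.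
Implicit Types (S A M : {set 'I_n}) (F G : {set {set 'I_n}}) (g : boolfun n).

(* The sets A with S <= A <= M are the B :|: S with B <= M :\: S, so there
   are 2 ^ #|M :\: S| of them when S <= M: an odd number iff S = M. *)
Lemma odd_card_interval S M :
  odd #|[set A in powerset M | S \subset A]| = (S == M).
Proof.
have [SM|nSM] := boolP (S \subset M); last first.
  rewrite eqEsubset (negbTE nSM) (_ : [set _ in _ | _] = set0) ?cards0 //.
  apply/setP=> A; rewrite !inE; apply/negP=> /andP[AM SA].
  by rewrite (subset_trans SA AM) in nSM.
have shiftK (B : {set 'I_n}) : B \subset M :\: S -> (B :|: S) :\: S = B.
  move/subsetP=> BMS; apply/setP=> i; rewrite !inE.
  by case: (boolP (i \in B)) => [/BMS|] /=; rewrite ?inE ?andNb ?andbT // ; case/andP.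
have -> : [set A in powerset M | S \subset A] =
          [set B :|: S | B in powerset (M :\: S)].
  apply/setP=> A; rewrite inE powersetE; apply/andP/imsetP => [[AM SA]|[B]].
    exists (A :\: S); first by rewrite powersetE setSD.
    apply/setP=> i; rewrite !inE.
    by case: (boolP (i \in S)) => [/(subsetP SA)->|]; rewrite ?orbT ?orbF.
  rewrite powersetE => BMS ->; split; last exact: subsetUr.
  by rewrite subUset SM (subset_trans BMS) ?subsetDl.
rewrite card_in_imset ?card_powerset; last first.
  move=> B1 B2; rewrite !powersetE => /shiftK E1 /shiftK E2 E.
  by rewrite -E1 -E2 E.
by rewrite oddX orbF cards_eq0 setD_eq0 eqEsubset SM.
Qed.

Lemma monomial_indicator S A : monomial S (fun i => i \in A) = (S \subset A).
Proof.
apply/forallP/subsetP => [inS i iS | SA i]; first exact: implyP (inS i) iS.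
by apply/implyP/SA.
Qed.

(* Moebius inversion: the coefficient of the monomial M in the polynomial
   representation of g is the xor of g over the indicators of subsets of M.
   In particular the representation of a function is unique. *)
Lemma anf_coefficient F g M : anf_rep F g ->
  \big[addb/false]_(A in powerset M) g (fun i => i \in A) = (M \in F).
Proof.
move=> Fg; under eq_bigr do rewrite Fg.
rewrite exchange_big /=.
under eq_bigr do under eq_bigr do rewrite monomial_indicator.
under eq_bigr do rewrite big_addb_odd odd_card_interval.
have [MF|nMF] := boolP (M \in F).
  by rewrite (bigD1 M) //= eqxx big1 // => S /andP[_ /negbTE].
by rewrite big1 // => S SF; apply/negbTE; apply: contra nMF => /eqP <-.
Qed.

Lemma anf_rep_const F M (c : bool) : anf_rep F (fun=> c) -> M \in F -> c.
Proof.
move=> Fc MF; have := anf_coefficient M Fc; rewrite MF.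
by case: c {Fc} => //; rewrite big1.
Qed.

(* Polynomial representations of the two cofactors of g at the variable j:
   fixing x_j := 0 kills the monomials containing x_j, fixing x_j := 1 sends
   S to S :\ j, so that the monomials S and j |: S of F cancel mod 2. *)
Definition cofactor0 F (j : 'I_n) := [set S : {set 'I_n} in F | j \notin S].
Definition cofactor1 F (j : 'I_n) :=
  [set S : {set 'I_n} | (j \notin S) && ((S \in F) (+) (j |: S \in F))].

Lemma monomial_fix0 S j x :
  monomial S (fun i => if i \in [set j] then false else x i) =
  (j \notin S) && monomial S x.
Proof.
have [jS|njS] /= := boolP (j \in S).
  by apply/negbTE/forallP => /(_ j); rewrite jS inE eqxx.
apply: eq_forallb => i; rewrite inE.
by case: eqP => // ->; rewrite (negbTE njS).
Qed.

Lemma monomial_fix1 S j x :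
  monomial S (fun i => if i \in [set j] then true else x i) =
  monomial (S :\ j) x.
Proof.
apply: eq_forallb => i; rewrite !inE.
by case: eqP => //= _; case: (i \in S).
Qed.

Lemma anf_rep_cofactor0 F g j : anf_rep F g ->
  anf_rep (cofactor0 F j) (restrict g [set j] (fun=> false)).
Proof.
move=> Fg x; rewrite /restrict Fg; under eq_bigr do rewrite monomial_fix0.
rewrite !(big_mkcond (fun S => S \in _)); apply: eq_bigr => S _.
by rewrite inE; case: (S \in F); case: (j \in S).
Qed.

Lemma setU1D1_eq (j : 'I_n) T : ((j |: T) :\ j == T) = (j \notin T).
Proof.
have [jT|njT] := boolP (j \in T); last by rewrite setU1K ?eqxx.
by apply/negbTE; apply: contraL jT => /eqP <-; rewrite setD11.
Qed.

Lemma anf_rep_cofactor1 F g j : anf_rep F g ->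
  anf_rep (cofactor1 F j) (restrict g [set j] (fun=> true)).
Proof.
move=> Fg x; rewrite /restrict Fg; under eq_bigr do rewrite monomial_fix1.
rewrite (bigID (fun S => j \in S)) /=.
rewrite (reindex_onto (fun T => j |: T) (fun S => S :\ j)) /=; last first.
  by move=> S /andP[_ jS]; rewrite setD1K.
under eq_bigl do rewrite setU11 andbT setU1D1_eq.
rewrite [X in X (+) _]big_mkcond [X in _ (+) X]big_mkcond [RHS]big_mkcond.
rewrite -big_split; apply: eq_bigr => S _; rewrite [S \in cofactor1 F j]inE.
have [jS|njS] := boolP (j \in S); first by rewrite !andbF.
rewrite setU1K // (_ : S :\ j = S); last by apply/setDidPl; rewrite disjoint_sym disjoints1.
by case: (S \in F); case: (j |: S \in F); case: (monomial S x).
Qed.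

Lemma maximal_cofactor0 F M j : maximal_monomial F M -> j \notin M ->
  maximal_monomial (cofactor0 F j) M.
Proof.
move=> [MF Mmax] njM; split => [|S]; first by rewrite inE MF.
by rewrite inE => /andP[SF _]; apply: Mmax.
Qed.

Lemma maximal_cofactor1 F M j : maximal_monomial F M -> j \notin M ->
  maximal_monomial (cofactor1 F j) M.
Proof.
move=> [MF Mmax] njM.
have not_above S : S \in F -> M \subset S -> j \notin S.
  by move=> SF /(Mmax S SF) ->.
split=> [|S].
  rewrite inE njM MF /=; apply/negP => jMF.
  by move: (not_above _ jMF (subsetUr _ _)); rewrite setU11.
rewrite inE => /andP[njS SF] MS.
have [SF'|SnF] := boolP (S \in F); first exact: Mmax SF' MS.
move: SF; rewrite (negbTE SnF) /= => jSF.
by move: (not_above _ jSF (subset_trans MS (subsetUr _ _))); rewrite setU11.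
Qed.

Lemma cofactor_maximal F g M j (b : bool) :
  anf_rep F g -> maximal_monomial F M -> j \notin M ->
  exists G, anf_rep G (restrict g [set j] (fun=> b)) /\ maximal_monomial G M.
Proof.
move=> Fg FM njM; case: b.
  by exists (cofactor1 F j); split; [apply: anf_rep_cofactor1 | apply: maximal_cofactor1].
by exists (cofactor0 F j); split; [apply: anf_rep_cofactor0 | apply: maximal_cofactor0].
Qed.

End AlgebraicNormalForm.

Section DecisionTrees.
Variable n : nat.
Implicit Types (T : dtree n) (M : {set 'I_n}) (F G : {set {set 'I_n}}).

Fixpoint restrict_tree M (xi : 'I_n -> bool) T : dtree n :=
  match T with
  | DLeaf b => DLeaf n b
  | DNode i T0 T1 =>
      if i \in M then (if xi i then restrict_tree M xi T1 else restrict_tree M xi T0)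
      else DNode i (restrict_tree M xi T0) (restrict_tree M xi T1)
  end.

Lemma dt_eval_ext T (x y : 'I_n -> bool) :
  (forall i, x i = y i) -> dt_eval T x = dt_eval T y.
Proof. by move=> xy; elim: T => //= i T0 IH0 T1 IH1; rewrite xy IH0 IH1. Qed.

Lemma dt_eval_restrict_tree M xi T x :
  dt_eval (restrict_tree M xi T) x = restrict (dt_eval T) M xi x.
Proof.
rewrite /restrict; elim: T => //= i T0 IH0 T1 IH1.
by case: (i \in M) => /=; [case: (xi i) | rewrite IH0 IH1].
Qed.

Lemma dt_depth_restrict_tree M xi T :
  dt_depth (restrict_tree M xi T) <= dt_depth T.
Proof.
elim: T => //= i T0 IH0 T1 IH1.
have le0 := leq_trans IH0 (leq_maxl _ (dt_depth T1)).
have le1 := leq_trans IH1 (leq_maxr (dt_depth T0) _).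
by case: (i \in M) => /=; [case: (xi i); apply: leqW | rewrite ltnS geq_max le0].
Qed.

Lemma dt_depth_restrict_root M xi j T0 T1 : j \in M ->
  dt_depth (restrict_tree M xi (DNode j T0 T1)) < dt_depth (DNode j T0 T1).
Proof.
move=> jM /=; rewrite jM ltnS.
case: (xi j); rewrite (leq_trans (dt_depth_restrict_tree _ _ _)) //.
  exact: leq_maxr.
exact: leq_maxl.
Qed.

Lemma is_depth_dt_restrict_tree d M xi T :
  dt_depth (restrict_tree M xi T) <= d -> is_depth_dt d (restrict (dt_eval T) M xi).
Proof. by move=> dR; exists (restrict_tree M xi T); split=> // x; apply: dt_eval_restrict_tree. Qed.

Lemma dt_eval_shannon T j x :
  dt_eval T x = if x j then dt_eval (restrict_tree [set j] (fun=> true) T) x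
                else dt_eval (restrict_tree [set j] (fun=> false) T) x.
Proof.
rewrite !dt_eval_restrict_tree /restrict.
by case xj: (x j); apply: dt_eval_ext => i; rewrite inE; case: eqP => // ->.
Qed.

Lemma is_depth_dt_branch k (g g0 g1 : boolfun n) j :
  (forall x, g x = if x j then g1 x else g0 x) ->
  is_depth_dt k g0 -> is_depth_dt k g1 -> is_depth_dt k.+1 g.
Proof.
move=> gE [T0 [d0 e0]] [T1 [d1 e1]]; exists (DNode j T0 T1); split.
  by rewrite /= ltnS geq_max d0 d1.
by move=> x; rewrite gE /= e0 e1.
Qed.

Lemma anf_rep_depth0 T G M :
  dt_depth T <= 0 -> anf_rep G (dt_eval T) -> M \in G -> forall x, dt_eval T x.
Proof. by case: T => // c _ Gc MG x; apply: anf_rep_const Gc MG. Qed.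

Lemma restrict_maximal_monomial d T F M xi :
  dt_depth T <= d -> anf_rep F (dt_eval T) -> maximal_monomial F M ->
  is_depth_dt d.-1 (restrict (dt_eval T) M xi).
Proof.
elim: d T F M => [|k IH] T F M dT FT FM.
  exact/is_depth_dt_restrict_tree/(leq_trans (dt_depth_restrict_tree _ _ _)).
case: T dT FT => [b|j T0 T1] dT FT; first by exists (DLeaf n b).
have [jM|njM] := boolP (j \in M).
  apply: is_depth_dt_restrict_tree.
  by rewrite -ltnS (leq_trans (dt_depth_restrict_root _ _ _ jM)).
(* the root variable x_j is free: split f into its cofactors at x_j *)
set T := DNode j T0 T1.
pose U b := restrict_tree [set j] (fun=> b) T.
have dU b : dt_depth (U b) <= k.
  by rewrite -ltnS (leq_trans (dt_depth_restrict_root _ _ _ (set11 j))).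
have GU b : exists G, anf_rep G (dt_eval (U b)) /\ maximal_monomial G M.
  have [G [Gf GM]] := cofactor_maximal b FT FM njM.
  by exists G; split=> // x; rewrite dt_eval_restrict_tree.
have splitE x : restrict (dt_eval T) M xi x =
    if x j then restrict (dt_eval (U true)) M xi x
    else restrict (dt_eval (U false)) M xi x.
  by rewrite /restrict (dt_eval_shannon _ j) (negbTE njM).
case: k IH dU {dT} => [|k] IH dU.
  (* both cofactors are the constant 1, hence so is the restriction *)
  have cof_one b x : dt_eval (U b) x.
    by have [G [UG [MG _]]] := GU b; exact: anf_rep_depth0 (dU b) UG MG x.
  exists (DLeaf n true); split=> // x.
  by rewrite splitE /restrict !cof_one; case: (x j).
apply: (is_depth_dt_branch splitE).
  by have [G [UG GM]] := GU false; apply: IH (dU false) UG GM.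
by have [G [UG GM]] := GU true; apply: IH (dU true) UG GM.
Qed.

End DecisionTrees.

Theorem mainTheorem14 (n d : nat) (f : boolfun n)
    (F : {set {set 'I_n}}) (M : {set 'I_n}) :
  1 <= d ->
  is_depth_dt d f ->
  anf_rep F f ->
  maximal_monomial F M ->
  forall xi : 'I_n -> bool, is_depth_dt d.-1 (restrict f M xi).
Proof.
move=> _ [T [dT Tf]] Ff FM xi.
have FT : anf_rep F (dt_eval T) by move=> x; rewrite Tf Ff.
have [T' [dT' T'E]] := restrict_maximal_monomial xi dT FT FM.
by exists T'; split=> // x; rewrite T'E /restrict Tf.
Qed.
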